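(* Let $\Gamma$ be a connected signed graph on $N$ vertices containing edges of both signs, with signed Laplacian $\mathcal{L}$. For each $i$ let $D_i=\{z\in\mathbb{C}:|z-\mathcal{L}_{ii}|\le\sum_{j\ne i}|\mathcal{L}_{ij}|\}$ be the $i$-th Gershgorin disc, and let $n$ be the number of indices $i$ for which $0$ lies in the interior of $D_i$. Then $n\ge\tau(\Gamma)+1$.
   Context: A signed graph $\Gamma$ is a finite simple undirected graph with vertex set $\{1,\dots,N\}$ in which every edge $\{i,j\}$ carries a nonzero real weight $\gamma_{ij}$, which may be of either sign ($\gamma_{ij}=0$ for non-edges). The signed Laplacian has $\mathcal{L}_{ij}=\gamma_{ij}$ for $i\ne j$ and $\mathcal{L}_{ii}=-\sum_{k\ne i}\gamma_{ik}$. $\Gamma_+$ (resp. $\Gamma_-$) is the spanning subgraph on all vertices containing exactly the positively (resp. negatively) weighted edges; $c(H)$ is the number of connected components of $H$; the flexibility is $\tau(\Gamma)=N-c(\Gamma_-)-c(\Gamma_+)+1$. *)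

From mathcomp Require Import all_boot all_order all_algebra.
Set Implicit Arguments. Unset Strict Implicit. Unset Printing Implicit Defensive.
Import Order.TTheory GRing.Theory Num.Theory.
Local Open Scope ring_scope.

Section SignedGraph.
Variables (R : realFieldType) (N : nat).

(* A signed graph on vertex set 'I_N is given by its weight function gamma:
   gamma i j <> 0 iff {i,j} is an edge; simple undirected means gamma is
   symmetric with zero diagonal. *)
Definition signed_graph (gamma : 'I_N -> 'I_N -> R) : Prop :=
  (forall i j, gamma i j = gamma j i) /\ (forall i, gamma i i = 0).

Definition signed_laplacian (gamma : 'I_N -> 'I_N -> R) : 'M[R]_N :=
  \matrix_(i, j) (if i == j then - \sum_(k | k != i) gamma i k else gamma i j).

Definition edge_rel (gamma : 'I_N -> 'I_N -> R) : rel 'I_N :=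
  fun i j => gamma i j != 0.
Definition pos_rel (gamma : 'I_N -> 'I_N -> R) : rel 'I_N :=
  fun i j => 0 < gamma i j.
Definition neg_rel (gamma : 'I_N -> 'I_N -> R) : rel 'I_N :=
  fun i j => gamma i j < 0.

Definition ncomp (e : rel 'I_N) : nat := n_comp (connect e) 'I_N.

Definition connected_graph (gamma : 'I_N -> 'I_N -> R) : Prop :=
  forall i j, connect (edge_rel gamma) i j.

Definition flexibility (gamma : 'I_N -> 'I_N -> R) : int :=
  (N%:Z - (ncomp (neg_rel gamma))%:Z - (ncomp (pos_rel gamma))%:Z + 1)%R.

(* Since the centre L_ii is real, 0 lies in the
   interior (open disc {z : |z - L_ii| < r_i}) iff |0 - L_ii| < r_i. *)
Definition gersh_radius (L : 'M[R]_N) (i : 'I_N) : R :=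
  \sum_(j | j != i) `|L i j|.
Definition zero_in_gersh_interior (L : 'M[R]_N) (i : 'I_N) : bool :=
  `|0 - L i i| < gersh_radius L i.

Definition n_gersh (L : 'M[R]_N) : nat :=
  #|[set i | zero_in_gersh_interior L i]|.

End SignedGraph.

(** A vertex carrying edges of both signs has 0 strictly inside its
    Gershgorin disc, because the centre is minus the sum of its (mixed-sign)
    edge weights and the radius is the sum of their absolute values, so the
    triangle inequality is strict.  Every other vertex is isolated in [Γ_+]
    or in [Γ_-].  An isolated vertex is a component by itself, and since
    [Γ_+] has an edge it has at least one further component; hence at most
    [c(Γ_+) - 1] vertices are isolated in [Γ_+], and likewise for [Γ_-].
    Altogether [N <= n + (c(Γ_+) - 1) + (c(Γ_-) - 1)], i.e. [n >= τ + 1]. *)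

From mathcomp Require Import all_boot all_order all_algebra.
From mathcomp Require Import zify.
Set Implicit Arguments. Unset Strict Implicit. Unset Printing Implicit Defensive.
Import Order.TTheory GRing.Theory Num.Theory.
Local Open Scope ring_scope.

Section Isolated.
Variables (T : finType) (e : rel T).

Definition isolated : {set T} := [set x | [forall y, ~~ e x y]].

Lemma isolated_connect x y : x \in isolated -> connect e x y -> y = x.
Proof.
rewrite inE => /forallP iso_x /connectP[[|z p] /= xp ->] //.
by move: xp (iso_x z) => /andP[-> _].
Qed.

Lemma connect_connect : connect (connect e) =2 connect e.
Proof.
move=> x y; apply/idP/idP; last exact: connect1.
exact: connect_sub.
Qed.

Hypothesis e_sym : symmetric e.

Lemma isolated_lt_n_comp v w : e v w -> (#|isolated| < n_comp (connect e) T)%N.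
Proof.
move=> e_vw; have e_csym := sym_connect_sym e_sym.
rewrite (eq_n_comp connect_connect) /n_comp_mem.
apply: proper_card; apply/properP; split.
  apply/subsetP=> x iso_x; rewrite !inE andbT.
  by apply/eqP; apply: (isolated_connect iso_x); apply: connect_root.
exists (fingraph.root e v); first by rewrite !inE andbT roots_root.
apply/negP=> iso_root.
have v_root : v = fingraph.root e v.
  by apply: (isolated_connect iso_root); rewrite e_csym connect_root.
by move: iso_root; rewrite -v_root inE => /forallP/(_ w); rewrite e_vw.
Qed.

End Isolated.

Lemma ltr_norm_sum_mixed_signs (R : realDomainType) (I : finType) (P : pred I)
    (F : I -> R) j k :
  P j -> 0 < F j -> P k -> F k < 0 ->
  `|\sum_(i | P i) F i| < \sum_(i | P i) `|F i|.
Proof.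
move=> Pj Fj_gt0 Pk Fk_lt0.
have [S_ge0|S_lt0] := lerP 0 (\sum_(i | P i) F i).
  rewrite ger0_norm // (bigD1 k) //= [X in _ < X](bigD1 k) //=.
  apply: ltr_leD; first by rewrite ltr0_norm // (lt_trans Fk_lt0) ?oppr_gt0.
  by apply: ler_sum => i _; apply: ler_norm.
rewrite ltr0_norm // -sumrN (bigD1 j) //= [X in _ < X](bigD1 j) //=.
apply: ltr_leD; first by rewrite gtr0_norm // (lt_trans _ Fj_gt0) ?oppr_lt0.
by apply: ler_sum => i _; rewrite -normrN; apply: ler_norm.
Qed.

Section SignedLaplacian.
Variables (R : realFieldType) (N : nat) (gamma : 'I_N -> 'I_N -> R).
Hypothesis gamma_signed : signed_graph gamma.

Lemma pos_rel_sym : symmetric (pos_rel gamma).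
Proof. by move=> i j; rewrite /pos_rel gamma_signed.1. Qed.

Lemma neg_rel_sym : symmetric (neg_rel gamma).
Proof. by move=> i j; rewrite /neg_rel gamma_signed.1. Qed.

Lemma gersh_interior_mixed_signs i j k :
  0 < gamma i j -> gamma i k < 0 ->
  zero_in_gersh_interior (signed_laplacian gamma) i.
Proof.
have gamma_ii := gamma_signed.2 i.
move=> gamma_ij_gt0 gamma_ik_lt0.
have j_neq_i : j != i by apply: contraTneq gamma_ij_gt0 => ->; rewrite gamma_ii ltxx.
have k_neq_i : k != i by apply: contraTneq gamma_ik_lt0 => ->; rewrite gamma_ii ltxx.
rewrite /zero_in_gersh_interior /gersh_radius mxE eqxx sub0r opprK.
under [X in _ < X]eq_bigr => l l_neq_i do rewrite mxE eq_sym (negbTE l_neq_i).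
exact: (ltr_norm_sum_mixed_signs (P := predC1 i) j_neq_i gamma_ij_gt0 k_neq_i gamma_ik_lt0).
Qed.

Lemma gersh_or_isolated i :
  [|| zero_in_gersh_interior (signed_laplacian gamma) i,
      i \in isolated (pos_rel gamma) | i \in isolated (neg_rel gamma)].
Proof.
case/boolP: (i \in isolated (pos_rel gamma)) => [_ | ]; first by rewrite orbT.
rewrite inE => /forallPn[j /negbNE gamma_ij_gt0].
case/boolP: (i \in isolated (neg_rel gamma)) => [_ | ]; first by rewrite !orbT.
rewrite inE => /forallPn[k /negbNE gamma_ik_lt0].
by rewrite (gersh_interior_mixed_signs gamma_ij_gt0 gamma_ik_lt0).
Qed.

Lemma card_vertices_le_gersh_isolated :
  (N <= n_gersh (signed_laplacian gamma)
        + #|isolated (pos_rel gamma)| + #|isolated (neg_rel gamma)|)%N.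
Proof.
rewrite /n_gersh; set G := [set i | _].
set P := isolated (pos_rel gamma); set Q := isolated (neg_rel gamma).
rewrite -{1}(card_ord N) -cardsT.
apply: leq_trans (leq_add (leq_card_setU G P) (leqnn _)).
apply: leq_trans (leq_card_setU (G :|: P) Q).
apply/subset_leq_card/subsetP => i _.
by rewrite !in_setU [i \in G]inE -orbA gersh_or_isolated.
Qed.

End SignedLaplacian.

Theorem mainTheorem12 (R : realFieldType) (N : nat) (gamma : 'I_N -> 'I_N -> R) :
  signed_graph gamma ->
  connected_graph gamma ->
  (exists i j, 0 < gamma i j) ->
  (exists i j, gamma i j < 0) ->
  flexibility gamma + 1 <= (n_gersh (signed_laplacian gamma))%:Z.
Proof.
move=> gamma_signed _ [i [j gamma_ij_gt0]] [k [l gamma_kl_lt0]].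
have pos_comps : (#|isolated (pos_rel gamma)| < ncomp (pos_rel gamma))%N.
  exact: (isolated_lt_n_comp (pos_rel_sym gamma_signed) gamma_ij_gt0).
have neg_comps : (#|isolated (neg_rel gamma)| < ncomp (neg_rel gamma))%N.
  exact: (isolated_lt_n_comp (neg_rel_sym gamma_signed) gamma_kl_lt0).
have := card_vertices_le_gersh_isolated gamma_signed.
rewrite /flexibility; lia.
Qed.
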